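(* Let $A$ be a normed vector space over $\mathbb C$ with $A^\vee$ given the dual norm. On $\mathrm{Max}\,A$, the topology consisting of the sets $\{V\in\mathrm{Max}\,A:F(V)\in\mathcal U\}$, with $\mathcal U\subset\mathrm{Sub}\,A^\vee$ open in the lower Vietoris topology of $A^\vee$, is finer than the topology generated by the sets $\mathbf U_r(a)=\{V\in\mathrm{Max}\,A: d(a,V)>r\}$, $a\in A$, $r>0$.
   Context: $\mathrm{Max}\,A$ is the set of closed subspaces of $A$; $A^\vee$ the continuous dual; $F(V)=\{\phi\in A^\vee:\phi|_V=0\}$. The lower Vietoris topology on the set $\mathrm{Sub}\,A^\vee$ of subspaces of $A^\vee$ is generated by $\{\mathcal V:\mathcal V\cap\mathcal O\ne\emptyset\}$, $\mathcal O\subset A^\vee$ norm-open. *)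

From mathcomp Require Import all_boot all_order all_algebra.
From mathcomp Require Import all_classical all_reals all_analysis.
From mathcomp.real_closed Require Import complex.
Import Num.Theory GRing.Theory.

Set Implicit Arguments.
Unset Strict Implicit.
Unset Printing Implicit Defensive.

Local Open Scope ring_scope.
Local Open Scope classical_set_scope.
Local Open Scope complex_scope.

Definition topology_on (T : Type) (X : set T) (tau : set (set T)) : Prop :=
  [/\ (forall U, tau U -> U `<=` X),
      tau X,
      (forall U V, tau U -> tau V -> tau (U `&` V)) &
      (forall F : set (set T), F `<=` tau -> tau (\bigcup_(U in F) U))].

Definition generated_topology (T : Type) (X : set T) (S : set (set T))
  : set (set T) :=
  fun U => forall tau, topology_on X tau -> S `<=` tau -> tau U.

Section Dual.
Variables (R : realType) (A : normedModType R[i]).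

Definition MaxA : set (set A) :=
  [set V | [/\ closed V, V 0,
     (forall x y, V x -> V y -> V (x + y)) &
     (forall (c : R[i]) x, V x -> V (c *: x))]].

Definition cont_functional (phi : A -> R[i]) : Prop :=
  forall x (e : R), 0 < e -> exists2 d : R, 0 < d &
    forall y, `|x - y| < d%:C -> `|phi x - phi y| < e%:C.

Definition dual : set (A -> R[i]) :=
  [set phi | linear phi /\ cont_functional phi].

Definition dual_norm (phi : A -> R[i]) : R :=
  sup [set complex.Re `|phi a| | a in [set a : A | `|a| <= 1]].

Definition dual_open (O : set (A -> R[i])) : Prop :=
  O `<=` dual /\
  forall phi, O phi -> exists2 eps : R, 0 < eps &
    forall psi, dual psi -> dual_norm (fun a => phi a - psi a) < eps -> O psi.

Definition SubDual : set (set (A -> R[i])) :=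
  [set W | [/\ W `<=` dual, W (fun _ => 0),
     (forall phi psi, W phi -> W psi -> W (fun a => phi a + psi a)) &
     (forall (c : R[i]) phi, W phi -> W (fun a => c * phi a))]].

Definition Fann (V : set A) : set (A -> R[i]) :=
  [set phi | dual phi /\ forall v, V v -> phi v = 0].

Definition lower_vietoris : set (set (set (A -> R[i]))) :=
  generated_topology SubDual
    [set [set W | SubDual W /\ exists2 phi, W phi & O phi] | O in dual_open].

Definition F_topology : set (set (set A)) :=
  [set [set V | MaxA V /\ U (Fann V)] | U in lower_vietoris].

Definition dist (a : A) (V : set A) : R := inf [set complex.Re `|a - v| | v in V].

Definition Ubox (r : R) (a : A) : set (set A) :=
  [set V | MaxA V /\ r < dist a V].

Definition dist_topology : set (set (set A)) :=
  generated_topology MaxA [set Ubox r a | r in [set r : R | 0 < r] & a in setT].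

End Dual.

(* The sets U_r(a) generate the distance topology and the pullback along F of
   the lower Vietoris topology is a topology, so it suffices to exhibit each
   U_r(a) as {V | F(V) meets O} for a norm-open O.  We take
   O = {psi | r ||psi|| < |psi(a)|}.  If psi in F(V) lies in O then
   |psi(a)| = |psi(a - v)| <= ||psi|| ||a - v|| for every v in V, whence
   d(a, V) > r.  Conversely, if d(a, V) > r, a Hahn-Banach functional gives
   phi in F(V) with ||phi|| <= 1 and |phi(a)| >= d(a, V) > r.
   Hahn-Banach is proved in König's form: by Zorn there is a minimal sublinear
   functional below a given one, and a minimal one is linear because it cannot
   be shifted down in any direction.  Dominating by the shift of d(., V) in the
   direction a yields a real functional g vanishing on V with g <= ||.|| and
   g(a) >= d(a, V); its complexification x |-> g(x) - i g(ix) is phi. *)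

From HB Require Import structures.
From mathcomp Require Import all_boot all_order all_algebra.
From mathcomp Require Import all_classical all_reals all_analysis.
From mathcomp.real_closed Require Import complex.
From mathcomp Require Import lra ring.

Import Order.TTheory GRing.Theory Num.Theory.

Set Implicit Arguments.
Unset Strict Implicit.
Unset Printing Implicit Defensive.

Local Open Scope ring_scope.
Local Open Scope classical_set_scope.
Local Open Scope complex_scope.

Section Topologies.
Variables (T U : Type).

Lemma topology_on_generated (X : set T) (S : set (set T)) :
  (forall W, S W -> W `<=` X) -> topology_on X (generated_topology X S).
Proof.
move=> SX; split.
- move=> V /(_ [set V' | V' `<=` X]); apply => //.
  split=> // [W1 W2 W1X _ x [/W1X //]|F FX x [W /FX]]; exact.
- by move=> tau [].
- move=> W1 W2 h1 h2 tau tau_top S_tau; have [_ _ tauI _] := tau_top.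
  by apply: tauI; [exact: h1 | exact: h2].
- move=> F F_gen tau tau_top S_tau; have [_ _ _ tauU] := tau_top.
  by apply: tauU => W /F_gen; apply.
Qed.

Definition preimage_topology (X : set T) (f : T -> U) (tau : set (set U)) :=
  [set [set x | X x /\ W (f x)] | W in tau].

Lemma topology_on_preimage (X : set T) (Y : set U) (f : T -> U) tau :
  (forall x, X x -> Y (f x)) -> topology_on Y tau ->
  topology_on X (preimage_topology X f tau).
Proof.
move=> fXY [_ tauY tauI tauU]; split.
- by move=> _ [W _ <-] x [].
- by exists Y => //; apply/seteqP; split=> x /= => [[]|Xx]; last split; auto.
- move=> _ _ [W1 h1 <-] [W2 h2 <-]; exists (W1 `&` W2); first exact: tauI.
  by apply/seteqP; split=> x /= => [[? []]|[[? ?] [_ ?]]].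
- move=> F F_pre; pose G := [set W | tau W /\ F [set x | X x /\ W (f x)]].
  exists (\bigcup_(W in G) W); first by apply: tauU => W [].
  apply/seteqP; split=> x /=.
    by move=> [Xx [W [_ GW] Wx]]; exists [set x | X x /\ W (f x)].
  move=> [P FP Px]; have [W tauW eqP] := F_pre P FP.
  move: Px; rewrite -eqP => -[Xx Wx]; split=> //.
  by exists W => //; split=> //; rewrite eqP.
Qed.

End Topologies.

Section InfImage.
Variables (R : realType) (T : Type) (D : set T) (f : T -> R).

Lemma inf_image_le (m : R) t :
  (forall s, D s -> m <= f s) -> D t -> inf [set f s | s in D] <= f t.
Proof.
move=> f_ge Dt; apply: ge_inf; last by exists t.
by exists m => _ [s Ds <-]; apply: f_ge.
Qed.

Lemma le_inf_image (z : R) :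
  D !=set0 -> (forall s, D s -> z <= f s) -> z <= inf [set f s | s in D].
Proof.
move=> [t Dt] f_ge; apply: lb_le_inf; first by exists (f t), t.
by move=> _ [s Ds <-]; apply: f_ge.
Qed.

End InfImage.

Section Sublinear.
Variables (R : realType) (E : lmodType R).
Implicit Types (p q : E -> R) (x y : E).

Definition sublinear q := [/\ forall x y, q (x + y) <= q x + q y, q 0 = 0 &
  forall (t : R) x, 0 < t -> q (t *: x) <= t * q x].

Lemma sublinearZ q (t : R) x : sublinear q -> 0 <= t -> q (t *: x) = t * q x.
Proof.
move=> [_ q0 qZ]; rewrite le_eqVlt => /predU1P[<-|t_gt0].
  by rewrite scale0r q0 mul0r.
apply/le_anti; rewrite qZ //=.
have := qZ t^-1 (t *: x); rewrite invr_gt0 scalerA mulVf ?gt_eqF // scale1r => /(_ t_gt0).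
by rewrite -(ler_pM2l t_gt0) mulrA mulfV ?gt_eqF // mul1r.
Qed.

Lemma sublinear_oppr_ge q x : sublinear q -> - q (- x) <= q x.
Proof. by move=> [qD q0 _]; have := qD x (- x); rewrite subrr q0 lerNl; lra. Qed.

(* König's shift of [q] in the direction [x]: still sublinear and below [q], but
   [konig_shift q x (- x) <= - q x], which forces a minimal sublinear [q] to be odd. *)
Definition konig_shift q x y : R :=
  inf [set q (y + t *: x) - t * q x | t in [set t : R | 0 <= t]].

Section Shift.
Variables (q : E -> R) (x : E).
Hypothesis q_sub : sublinear q.

Lemma konig_shift_le_at y (t : R) :
  0 <= t -> konig_shift q x y <= q (y + t *: x) - t * q x.
Proof.
move=> t_ge0; apply: (inf_image_le (m := - q (- y))) => // s s_ge0.
have [qD _ _] := q_sub; have := qD (y + s *: x) (- y).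
by rewrite addrAC subrr add0r sublinearZ //; lra.
Qed.

Lemma konig_shift_le y : konig_shift q x y <= q y.
Proof. by have := konig_shift_le_at y (lexx 0); rewrite scale0r addr0 mul0r subr0. Qed.

Lemma konig_shift_opp_le : konig_shift q x (- x) <= - q x.
Proof.
have := konig_shift_le_at (- x) ler01; rewrite scale1r addNr mul1r.
by have [_ -> _] := q_sub; rewrite sub0r.
Qed.

Lemma sublinear_konig_shift : sublinear (konig_shift q x).
Proof.
have nonneg : [set t : R | 0 <= t] !=set0 by exists 0; rewrite /= lexx.
have [qD q0 _] := q_sub; split.
- move=> y1 y2; rewrite -lerBlDr; apply: le_inf_image => // t t_ge0.
  rewrite lerBlDr -lerBlDl; apply: le_inf_image => // s s_ge0; rewrite lerBlDl.
  apply: le_trans (konig_shift_le_at _ (addr_ge0 t_ge0 s_ge0)) _.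
  rewrite scalerDl addrACA mulrDl.
  by have := qD (y1 + t *: x) (y2 + s *: x); lra.
- apply/le_anti; rewrite (le_trans (konig_shift_le 0)) ?q0 //=.
  by apply: le_inf_image => // t t_ge0; rewrite add0r sublinearZ // subrr.
- move=> c y c_gt0; have cV_gt0 : 0 < c^-1 by rewrite invr_gt0.
  rewrite -(ler_pM2l cV_gt0) mulrA mulVf ?gt_eqF // mul1r.
  apply: le_inf_image => // t t_ge0.
  rewrite -(ler_pM2l c_gt0) mulrA mulfV ?gt_eqF // mul1r.
  apply: le_trans (konig_shift_le_at _ (mulr_ge0 (ltW c_gt0) t_ge0)) _.
  by rewrite -scalerA -scalerDr (sublinearZ _ q_sub (ltW c_gt0)) mulrBr mulrA.
Qed.

End Shift.

End Sublinear.

Section HahnBanach.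
Variables (R : realType) (E : lmodType R).
Implicit Types (p q : E -> R) (x y : E).

Lemma sublinear_inf_chain (C : set (E -> R)) (m : E -> R) :
  C !=set0 -> (forall q, C q -> sublinear q) ->
  total_on C (fun q q' => forall x, q x <= q' x) ->
  (forall q x, C q -> m x <= q x) ->
  sublinear (fun x => inf [set q x | q in C]).
Proof.
move=> C0 C_sub C_tot C_ge.
have inf_le q x : C q -> inf [set q' x | q' in C] <= q x.
  by move=> Cq; apply: (inf_image_le (m := m x)) => // q' /C_ge.
split.
- move=> x y; rewrite -lerBlDr; apply: le_inf_image => // q2 Cq2.
  rewrite lerBlDr -lerBlDl; apply: le_inf_image => // q1 Cq1; rewrite lerBlDl.
  have [qmin [Cqmin le1 le2]] :
      exists q, [/\ C q, forall z, q z <= q1 z & forall z, q z <= q2 z].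
    by have [h|h] := C_tot _ _ Cq1 Cq2; [exists q1 | exists q2].
  have [qD _ _] := C_sub _ Cqmin.
  by apply: le_trans (inf_le _ _ Cqmin) _; apply: le_trans (qD x y) _; apply: lerD.
- have [q Cq] := C0; apply/le_anti/andP; split.
    by have [_ <- _] := C_sub _ Cq; apply: inf_le.
  by apply: le_inf_image => // q' /C_sub[_ -> _].
- move=> c x c_gt0; have cV_gt0 : 0 < c^-1 by rewrite invr_gt0.
  rewrite -(ler_pM2l cV_gt0) mulrA mulVf ?gt_eqF // mul1r.
  apply: le_inf_image => // q Cq; rewrite -(ler_pM2l c_gt0) mulrA mulfV ?gt_eqF // mul1r.
  by apply: le_trans (inf_le _ _ Cq) _; have [_ _ ->] := C_sub _ Cq.
Qed.

Variable p : E -> R.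
Hypothesis p_sub : sublinear p.

Lemma dominated_sublinear_chain_lb (C : set (E -> R)) :
  C !=set0 -> (forall q, C q -> sublinear q /\ forall x, q x <= p x) ->
  total_on C (fun q q' => forall x, q x <= q' x) ->
  exists2 b, sublinear b /\ (forall x, b x <= p x) & forall q x, C q -> b x <= q x.
Proof.
move=> C0 C_dom C_tot.
have C_ge q x : C q -> - p (- x) <= q x.
  move=> /C_dom[q_sub q_le]; apply: le_trans (sublinear_oppr_ge _ q_sub).
  by rewrite lerN2.
have b_le q x : C q -> inf [set q' x | q' in C] <= q x.
  by move=> Cq; apply: (inf_image_le (m := - p (- x))) => // q' /C_ge; apply.
exists (fun x => inf [set q x | q in C]) => //; split.
  by apply: (sublinear_inf_chain (m := fun x => - p (- x))) => // q /C_dom[].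
by move=> x; have [q Cq] := C0; apply: le_trans (b_le _ _ Cq) ((C_dom _ Cq).2 x).
Qed.

Lemma exists_minimal_sublinear : exists q, [/\ sublinear q, (forall x, q x <= p x) &
  forall q', sublinear q' -> (forall x, q' x <= q x) -> forall x, q x <= q' x].
Proof.
pose T := {q | sublinear q /\ forall x, q x <= p x}.
pose ge_fun (q q' : T) := `[< forall x, sval q' x <= sval q x >].
have p_T : sublinear p /\ forall x, p x <= p x by [].
have ge_refl (q : T) : ge_fun q q by apply/asboolP.
have ge_trans (q1 q2 q3 : T) : ge_fun q1 q2 -> ge_fun q2 q3 -> ge_fun q1 q3.
  move=> /asboolP h12 /asboolP h23; apply/asboolP => x.
  exact: le_trans (h23 x) (h12 x).
have chain_lb (Ch : set T) :
    total_on Ch ge_fun -> exists b : T, forall q : T, Ch q -> ge_fun q b.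
  move=> Ch_tot; have [[q0 Chq0]|Ch0] := pselect (Ch !=set0); last first.
    by exists (exist _ p p_T) => q Chq; case: Ch0; exists q.
  have [|_ [q _ <-]|_ _ [q1 Chq1 <-] [q2 Chq2 <-]|b b_T b_le] :=
    dominated_sublinear_chain_lb (C := sval @` Ch).
  - by exists (sval q0), q0.
  - exact: (svalP q).
  - by have [/asboolP h|/asboolP h] := Ch_tot _ _ Chq1 Chq2; [right | left].
  by exists (exist _ b b_T) => q Chq; apply/asboolP => x; apply: b_le; exists q.
have [[q [q_sub q_le]] q_min] := ZL_preorder (exist _ p p_T) ge_refl ge_trans chain_lb.
exists q; split=> // q' q'_sub q'_le.
have q'_T : sublinear q' /\ forall x, q' x <= p x.
  by split=> // x; apply: le_trans (q'_le x) (q_le x).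
have /q_min /asboolP // : ge_fun (exist _ q (conj q_sub q_le)) (exist _ q' q'_T).
by apply/asboolP.
Qed.

End HahnBanach.

Section MinimalSublinear.
Variables (R : realType) (E : lmodType R) (q : E -> R).
Hypothesis q_sub : sublinear q.
Hypothesis q_min :
  forall q', sublinear q' -> (forall x, q' x <= q x) -> forall x, q x <= q' x.

Lemma minimal_sublinearN x : q (- x) = - q x.
Proof.
apply/le_anti/andP; split; last by rewrite lerNl; apply: sublinear_oppr_ge.
apply: le_trans (konig_shift_opp_le x q_sub).
by apply: q_min; [apply: sublinear_konig_shift | apply: konig_shift_le].
Qed.

Lemma minimal_sublinearD x y : q (x + y) = q x + q y.
Proof.
have [qD _ _] := q_sub; apply/le_anti; rewrite qD /=.
have := qD (- x) (- y); rewrite -opprD !minimal_sublinearN; lra.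
Qed.

Lemma minimal_sublinearZ (t : R) x : q (t *: x) = t * q x.
Proof.
have [t_ge0|t_lt0] := leP 0 t; first exact: sublinearZ.
rewrite -[t]opprK scaleNr minimal_sublinearN sublinearZ ?mulNr //.
by rewrite oppr_ge0 ltW.
Qed.

End MinimalSublinear.

Theorem hahn_banach_sublinear (R : realType) (E : lmodType R) (p : E -> R) :
  sublinear p -> exists g : E -> R, [/\ forall x y, g (x + y) = g x + g y,
    forall (t : R) x, g (t *: x) = t * g x & forall x, g x <= p x].
Proof.
move=> /exists_minimal_sublinear[q [q_sub q_le q_min]].
exists q; split=> [x y|t x|//]; first exact: minimal_sublinearD.
exact: minimal_sublinearZ.
Qed.

Section RealPartOfNorm.
Variables (R : realType) (V : normedZmodType R[i]).
Implicit Types x y : V.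

Definition rnorm x : R := complex.Re `|x|.

Lemma normr_rnorm x : `|x| = (rnorm x)%:C.
Proof.
have := normr_ge0 x; rewrite /rnorm.
by case: `|x| => a b; rewrite lecE /= => /andP[/eqP ->].
Qed.

Lemma rnorm_ge0 x : 0 <= rnorm x.
Proof. by rewrite -lecR -normr_rnorm normr_ge0. Qed.

Lemma rnorm_gt0 x : (0 < rnorm x) = (x != 0).
Proof. by rewrite -ltcR -normr_rnorm normr_gt0. Qed.

Lemma rnorm_lt x (d : R) : (`|x| < d%:C) = (rnorm x < d).
Proof. by rewrite normr_rnorm ltcR. Qed.

Lemma rnorm_le1 x : (`|x| <= 1) = (rnorm x <= 1).
Proof. by rewrite normr_rnorm; exact: lecR. Qed.

Lemma rnorm0 : rnorm 0 = 0.
Proof. by rewrite /rnorm normr0. Qed.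

Lemma rnormN x : rnorm (- x) = rnorm x.
Proof. by rewrite /rnorm normrN. Qed.

Lemma ler_rnormD x y : rnorm (x + y) <= rnorm x + rnorm y.
Proof. by have := ler_normD x y; rewrite !normr_rnorm -rmorphD lecR. Qed.

End RealPartOfNorm.

Section ComplexRealPartOfNorm.
Variable R : realType.
Implicit Types z w : R[i].

Lemma rnormM z w : rnorm (z * w) = rnorm z * rnorm w.
Proof. by apply: complexI; rewrite -normr_rnorm normrM !normr_rnorm rmorphM. Qed.

Lemma rnormC (t : R) : rnorm t%:C = `|t|.
Proof. by rewrite /rnorm normc_def /= expr0n addr0 sqrtr_sqr. Qed.

Lemma Re_le_rnorm z : complex.Re z <= rnorm z.
Proof.
case: z => a b; rewrite /rnorm normc_def /=.
rewrite (le_trans (ler_norm a)) // -sqrtr_sqr ler_sqrt ?lerDl ?sqr_ge0 //.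
by rewrite addr_ge0 ?sqr_ge0.
Qed.

Lemma rnormZ (A : normedModType R[i]) z (x : A) :
  rnorm (z *: x) = rnorm z * rnorm x.
Proof. by apply: complexI; rewrite -normr_rnorm normrZ !normr_rnorm rmorphM. Qed.

Lemma rnormZ_ge0 (A : normedModType R[i]) (t : R) (x : A) :
  0 <= t -> rnorm (t%:C *: x) = t * rnorm x.
Proof. by move=> t_ge0; rewrite rnormZ rnormC ger0_norm. Qed.

End ComplexRealPartOfNorm.

Section Realification.
Variables (R : realType) (E : lmodType R[i]).

Definition realified : Type := E.
HB.instance Definition _ := GRing.Zmodule.on realified.

Definition realified_scale (t : R) (x : realified) : realified := t%:C *: (x : E).

Lemma realified_scaleA t u x :
  realified_scale t (realified_scale u x) = realified_scale (t * u) x.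
Proof. by rewrite /realified_scale scalerA rmorphM. Qed.

Lemma realified_scale1 : left_id 1 realified_scale.
Proof. by move=> x; rewrite /realified_scale rmorph1 scale1r. Qed.

Lemma realified_scaleDr : right_distributive realified_scale +%R.
Proof. by move=> t x y; rewrite /realified_scale scalerDr. Qed.

Lemma realified_scaleDl x : {morph realified_scale^~ x : t u / t + u}.
Proof. by move=> t u; rewrite /realified_scale rmorphD scalerDl. Qed.

HB.instance Definition _ := GRing.Zmodule_isLmodule.Build R realified
  realified_scaleA realified_scale1 realified_scaleDr realified_scaleDl.

Lemma realifiedZ t (x : realified) : t *: x = t%:C *: (x : E).
Proof. by []. Qed.

End Realification.

Section Complexification.
Variables (R : realType) (E : lmodType R[i]) (g : realified E -> R).
Hypothesis gD : forall x y, g (x + y) = g x + g y.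
Hypothesis gZ : forall (t : R) x, g (t *: x) = t * g x.

Definition complexify (x : E) : R[i] := (g x)%:C - 'i%C * (g ('i%C *: x))%:C.

Lemma Re_complexify x : complex.Re (complexify x) = g x.
Proof. by rewrite /complexify /= !mul0r !mulr0 !subr0. Qed.

Lemma linear_complexify : linear complexify.
Proof.
have gsplit (c : R[i]) x :
    g (c *: x) = complex.Re c * g x + complex.Im c * g ('i%C *: x).
  rewrite -!gZ -gD !realifiedZ scalerA; congr g.
  by rewrite [c in LHS]complexE (mulrC 'i%C); apply: (@scalerDl _ E).
move=> c x y; rewrite /complexify scalerDr !gD scalerA (gsplit c x) (gsplit ('i%C * c) x).
case: c => a b; apply/eqP; rewrite eq_complex /=; by apply/andP; split; apply/eqP; ring.
Qed.

Lemma complexifyZ c x : complexify (c *: x) = c * complexify x.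
Proof. exact: (scalable_linear linear_complexify). Qed.

End Complexification.

Lemma rnorm_complexify_le (R : realType) (A : normedModType R[i]) (g : realified A -> R) :
  (forall x y, g (x + y) = g x + g y) -> (forall (t : R) x, g (t *: x) = t * g x) ->
  (forall x : A, g x <= rnorm x) -> forall x, rnorm (complexify g x) <= rnorm x.
Proof.
move=> gD gZ g_le x; set z := complexify g x.
have [->|z_neq0] := eqVneq z 0; first by rewrite rnorm0 rnorm_ge0.
pose c := `|z| / z.
have c_norm : rnorm c = 1.
  by apply: complexI; rewrite -normr_rnorm normf_div normr_id mulfV ?normr_eq0.
have -> : rnorm z = complex.Re (complexify g (c *: x)).
  by rewrite complexifyZ // divfK.
by rewrite Re_complexify; apply: le_trans (g_le _) _; rewrite rnormZ c_norm mul1r.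
Qed.

Section Dual.
Variables (R : realType) (A : normedModType R[i]).
Implicit Types (phi psi : A -> R[i]) (x y : A).

Lemma linear_fun0 phi : linear phi -> phi 0 = 0.
Proof. by move=> phi_lin; rewrite -(subrr 0) (zmod_morphism_linear phi_lin) subrr. Qed.

Definition bounded_functional phi := exists M : R, forall x, rnorm (phi x) <= M * rnorm x.

Lemma bounded_cont_functional phi :
  linear phi -> bounded_functional phi -> cont_functional phi.
Proof.
move=> phi_lin [M phi_le] x e e_gt0.
have M1_gt0 : 0 < `|M| + 1 by rewrite ltr_wpDl.
exists (e / (`|M| + 1)); first by rewrite divr_gt0.
move=> y; rewrite rnorm_lt -(zmod_morphism_linear phi_lin) rnorm_lt => xy_lt.
apply: le_lt_trans (phi_le _) _.
apply: le_lt_trans (_ : _ <= (`|M| + 1) * rnorm (x - y)) _.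
  by rewrite ler_wpM2r ?rnorm_ge0 // (le_trans (ler_norm M)) // lerDl.
by rewrite -ltr_pdivlMl // mulrC.
Qed.

Lemma cont_functional_bounded phi :
  linear phi -> cont_functional phi -> bounded_functional phi.
Proof.
move=> phi_lin phi_cont; have [d d_gt0 phi_lt1] := phi_cont 0 1 ltr01.
exists (2 / d) => x; have [x0|x_neq0] := eqVneq x 0.
  by rewrite x0 linear_fun0 // !rnorm0 mulr0.
have x_gt0 : 0 < rnorm x by rewrite rnorm_gt0.
pose k := d / (2 * rnorm x).
have k_gt0 : 0 < k by rewrite divr_gt0 // mulr_gt0.
have kx : k * rnorm x = d / 2 by rewrite /k; field; rewrite gt_eqF.
have kx_lt : `|0 - k%:C *: x| < d%:C.
  by rewrite rnorm_lt sub0r rnormN (rnormZ_ge0 _ (ltW k_gt0)) kx; lra.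
have := phi_lt1 _ kx_lt.
rewrite linear_fun0 // (scalable_linear phi_lin).
rewrite !sub0r normrN rnorm_lt rnormM rnormC (ger0_norm (ltW k_gt0)) => /ltW phi_kx.
rewrite -(ler_pM2l k_gt0) (_ : k * (2 / d * rnorm x) = 1) //.
by rewrite /k; move: (rnorm x) x_gt0 => n n_gt0; field; rewrite !gt_eqF.
Qed.

Lemma dualP phi : dual phi <-> linear phi /\ bounded_functional phi.
Proof.
split=> [[phi_lin phi_cont]|[phi_lin phi_bd]]; split=> //.
  exact: cont_functional_bounded.
exact: bounded_cont_functional.
Qed.

Lemma dual0 : dual (fun _ : A => 0 : R[i]).
Proof.
apply/dualP; split; first by move=> c x y; rewrite scaler0 addr0.
by exists 0 => x; rewrite rnorm0 mul0r.
Qed.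

Lemma dualD phi psi : dual phi -> dual psi -> dual (fun x => phi x + psi x).
Proof.
move=> /dualP[phi_lin [M1 phi_le]] /dualP[psi_lin [M2 psi_le]]; apply/dualP; split.
  by move=> c x y; rewrite phi_lin psi_lin scalerDr addrACA.
exists (M1 + M2) => x; rewrite mulrDl; apply: le_trans (ler_rnormD _ _) _.
exact: lerD.
Qed.

Lemma dualM c phi : dual phi -> dual (fun x => c * phi x).
Proof.
move=> /dualP[phi_lin [M phi_le]]; apply/dualP; split.
  by move=> c' x y; rewrite phi_lin mulrDr [_ *: _]/(_ * _) mulrCA.
exists (rnorm c * M) => x; rewrite rnormM -mulrA.
by apply: ler_wpM2l; [apply: rnorm_ge0 | apply: phi_le].
Qed.

Lemma dualB phi psi : dual phi -> dual psi -> dual (fun x => phi x - psi x).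
Proof.
move=> dphi dpsi; have := dualD dphi (dualM (-1) dpsi).
by congr dual; apply/funext => x; rewrite mulN1r.
Qed.

Lemma SubDual_Fann (V : set A) : SubDual (Fann V).
Proof.
split=> [phi []//|||].
- by split=> //; apply: dual0.
- move=> phi psi [dphi phiV] [dpsi psiV]; split; first exact: dualD.
  by move=> v Vv; rewrite phiV // psiV // addr0.
- move=> c phi [dphi phiV]; split; first exact: dualM.
  by move=> v Vv; rewrite phiV // mulr0.
Qed.

Lemma dual_norm_ub phi a : dual phi -> rnorm a <= 1 -> rnorm (phi a) <= dual_norm phi.
Proof.
move=> /dualP[_ [M phi_le]] a_le1.
apply: ub_le_sup; last by exists a; rewrite /= ?rnorm_le1.
exists `|M| => _ [b /= /[!rnorm_le1] b_le1 <-]; apply: le_trans (phi_le b) _.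
rewrite (le_trans (ler_norm _)) // normrM (ger0_norm (rnorm_ge0 b)).
by rewrite ler_piMr.
Qed.

Lemma dual_norm_le phi (K : R) :
  (forall a, rnorm a <= 1 -> rnorm (phi a) <= K) -> dual_norm phi <= K.
Proof.
move=> phi_le; apply: ge_sup; first by exists (rnorm (phi 0)), 0; rewrite /= ?normr0.
by move=> _ [a /= /[!rnorm_le1] a_le1 <-]; apply: phi_le.
Qed.

Lemma dual_norm_ge0 phi : dual phi -> 0 <= dual_norm phi.
Proof.
move=> dphi; apply: le_trans (dual_norm_ub dphi (_ : rnorm 0 <= 1)).
  exact: rnorm_ge0.
by rewrite rnorm0.
Qed.

Lemma rnorm_dual_le phi x : dual phi -> rnorm (phi x) <= dual_norm phi * rnorm x.
Proof.
move=> dphi; have [phi_lin _] := dphi; have [->|x_neq0] := eqVneq x 0.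
  by rewrite linear_fun0 // !rnorm0 mulr0.
have x_gt0 : 0 < rnorm x by rewrite rnorm_gt0.
have := dual_norm_ub dphi (_ : rnorm ((rnorm x)^-1%:C *: x) <= 1).
rewrite (scalable_linear phi_lin) rnormM rnormC rnormZ_ge0 ?invr_ge0 ?rnorm_ge0 //.
rewrite ger0_norm ?invr_ge0 ?rnorm_ge0 // mulVf ?gt_eqF // => /(_ (lexx 1)).
by rewrite ler_pdivrMl // mulrC.
Qed.

End Dual.

Section Distance.
Variables (R : realType) (A : normedModType R[i]) (V : set A).
Implicit Types (x v : A).

Lemma dist_le x v : V v -> dist x V <= rnorm (x - v).
Proof. by move=> Vv; apply: (inf_image_le (m := 0)) => // w _; apply: rnorm_ge0. Qed.

Lemma le_dist x (z : R) :
  V !=set0 -> (forall v, V v -> z <= rnorm (x - v)) -> z <= dist x V.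
Proof. exact: le_inf_image. Qed.

Hypothesis V_max : MaxA V.

Lemma sublinear_dist : sublinear (fun x : realified A => dist x V).
Proof.
have [_ V0 VD VZ] := V_max; have V_neq0 : V !=set0 by exists 0.
split.
- move=> x y; rewrite -lerBlDr; apply: le_dist => // v Vv.
  rewrite lerBlDr -lerBlDl; apply: le_dist => // w Vw; rewrite lerBlDl.
  apply: le_trans (dist_le _ (VD _ _ Vv Vw)) _.
  by rewrite opprD addrACA; apply: ler_rnormD.
- apply/le_anti/andP; split; first by have := dist_le 0 V0; rewrite subr0 rnorm0.
  by apply: le_dist => // v _; apply: rnorm_ge0.
- move=> t x t_gt0; have tV_gt0 : 0 < t^-1 by rewrite invr_gt0.
  rewrite -(ler_pM2l tV_gt0) mulrA mulVf ?gt_eqF // mul1r.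
  apply: le_dist => // v Vv; rewrite -(ler_pM2l t_gt0) mulrA mulfV ?gt_eqF // mul1r.
  apply: le_trans (dist_le _ (VZ t%:C _ Vv)) _.
  by rewrite realifiedZ -scalerBr rnormZ_ge0 // ltW.
Qed.

Lemma exists_norming_annihilator a : exists phi, [/\ Fann V phi,
  forall x, rnorm (phi x) <= rnorm x & dist a V <= rnorm (phi a)].
Proof.
have [_ V0 _ VZ] := V_max; have dist_sub := sublinear_dist.
pose a' : realified A := a.
(* Domination by the shift of d(., V) in the direction a gives g(- a) <= - d(a, V). *)
have [g [gD gZ g_le]] := hahn_banach_sublinear (sublinear_konig_shift a' dist_sub).
have g_dist x : g x <= dist x V := le_trans (g_le x) (konig_shift_le a' dist_sub x).
have gN (x : realified A) : g (- x) = - g x by rewrite -scaleN1r gZ mulN1r.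
have g_norm x : g x <= rnorm x.
  by apply: le_trans (g_dist x) _; have := dist_le x V0; rewrite subr0.
have gV_le0 v : V v -> g v <= 0.
  by move=> Vv; apply: le_trans (g_dist v) _; have := dist_le v Vv; rewrite subrr rnorm0.
have gV v : V v -> g v = 0.
  move=> Vv; apply/le_anti; rewrite gV_le0 //= -oppr_le0 -gN gV_le0 //.
  by rewrite -scaleN1r; apply: VZ.
have dist_le_g : dist a V <= g a.
  by have := le_trans (g_le (- a')) (konig_shift_opp_le a' dist_sub); rewrite gN lerN2.
exists (complexify g); split.
- split=> [|v Vv]; last by rewrite /complexify gV // gV ?mulr0 ?subr0 //; apply: VZ.
  apply/dualP; split; first exact: linear_complexify.
  by exists 1 => x; rewrite mul1r; apply: rnorm_complexify_le.
- exact: rnorm_complexify_le.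
- by apply: le_trans dist_le_g _; rewrite -Re_complexify; apply: Re_le_rnorm.
Qed.

End Distance.

Section DistanceTopology.
Variables (R : realType) (A : normedModType R[i]).
Implicit Types (phi psi : A -> R[i]) (V : set A) (a x : A).

Definition dual_ev_gt (r : R) a : set (A -> R[i]) :=
  [set psi | dual psi /\ r * dual_norm psi < rnorm (psi a)].

Lemma dual_open_ev_gt (r : R) a : 0 <= r -> dual_open (dual_ev_gt r a).
Proof.
move=> r_ge0; split=> [psi []//|phi [dphi phi_gt]].
pose m := rnorm (phi a) - r * dual_norm phi.
have m_gt0 : 0 < m by rewrite subr_gt0.
have K_gt0 : 0 < rnorm a + r + 1 by have := rnorm_ge0 a; lra.
exists (m / (rnorm a + r + 1)); first by rewrite divr_gt0.
(* With D = ||phi - psi||, |psi(a)| >= |phi(a)| - D ||a|| and ||psi|| <= ||phi|| + D,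
   so D (||a|| + r) < m suffices. *)
move=> psi dpsi D_lt; split=> //.
set D := dual_norm _ in D_lt.
have dphi_psi := dualB dphi dpsi.
have D_ge0 : 0 <= D := dual_norm_ge0 dphi_psi.
have phi_split x : phi x = psi x + (phi x - psi x) by rewrite addrC subrK.
have psi_split x : psi x = phi x - (phi x - psi x) by rewrite opprB addrC subrK.
have phi_a : rnorm (phi a) <= rnorm (psi a) + D * rnorm a.
  rewrite {1}phi_split; apply: le_trans (ler_rnormD _ _) _; rewrite lerD2l.
  exact: (rnorm_dual_le a dphi_psi).
have N_psi : dual_norm psi <= dual_norm phi + D.
  apply: dual_norm_le => x x_le1; rewrite psi_split.
  apply: le_trans (ler_rnormD _ _) _; rewrite rnormN.
  apply: lerD; first exact: dual_norm_ub.
  exact: (dual_norm_ub (phi := fun x => phi x - psi x)).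
have := ler_wpM2l r_ge0 N_psi; rewrite ltr_pdivlMr // in D_lt.
have := rnorm_ge0 a; rewrite /m in D_lt; nra.
Qed.

Lemma lt_dist_Fann V phi (r : R) a : V 0 -> Fann V phi ->
  r * dual_norm phi < rnorm (phi a) -> r < dist a V.
Proof.
move=> V0 [dphi phiV] phi_gt; have [phi_lin _] := dphi.
have phi_a v : V v -> rnorm (phi a) <= dual_norm phi * rnorm (a - v).
  move=> Vv; rewrite -[phi a]subr0 -(phiV v Vv) -(zmod_morphism_linear phi_lin).
  exact: rnorm_dual_le.
have N_gt0 : 0 < dual_norm phi.
  rewrite lt_neqAle dual_norm_ge0 // andbT; apply/eqP => N0.
  by have := phi_a 0 V0; move: phi_gt; rewrite -N0 mulr0 mul0r; lra.
apply: lt_le_trans (_ : rnorm (phi a) / dual_norm phi <= _); first by rewrite ltr_pdivlMr.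
by apply: le_dist; [exists 0 | move=> v Vv; rewrite ler_pdivrMr // mulrC; apply: phi_a].
Qed.

End DistanceTopology.

Section FTopology.
Variables (R : realType) (A : normedModType R[i]).

Lemma topology_on_F : topology_on (@MaxA R A) (@F_topology R A).
Proof.
apply: topology_on_preimage (fun V _ => SubDual_Fann V) _.
by apply: topology_on_generated => _ [Ob _ <-] W [].
Qed.

Lemma F_topology_Ubox (r : R) (a : A) : 0 < r -> F_topology (Ubox r a).
Proof.
move=> r_gt0; exists [set W | SubDual W /\ exists2 phi, W phi & dual_ev_gt r a phi].
  move=> tau _; apply; exists (dual_ev_gt r a) => //.
  exact/dual_open_ev_gt/ltW.
apply/seteqP; split=> V /=.
  move=> [V_max [_ [phi Fphi [_ phi_gt]]]]; split=> //.
  by have [_ V0 _ _] := V_max; apply: lt_dist_Fann V0 Fphi phi_gt.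
move=> [V_max r_lt]; split=> //; split; first exact: SubDual_Fann.
have [phi [Fphi phi_le dist_le]] := exists_norming_annihilator V_max a.
exists phi => //; split; first by case: Fphi.
have N_le1 : dual_norm phi <= 1.
  by apply: dual_norm_le => x x_le1; apply: le_trans (phi_le x) x_le1.
apply: le_lt_trans (_ : r * dual_norm phi <= r) _.
  by have := ler_wpM2l (ltW r_gt0) N_le1; rewrite mulr1.
exact: lt_le_trans r_lt dist_le.
Qed.

End FTopology.

Unset Implicit Arguments.

Theorem lemma7p24 (R : realType) (A : normedModType R[i]) :
  @dist_topology R A `<=` @F_topology R A.
Proof.
move=> U; apply; first exact: topology_on_F.
by move=> _ [r r_gt0 [a _ <-]]; apply: F_topology_Ubox.
Qed.
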